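(* There is an absolute constant $C>0$ such that for all $k\ge 2$, $\gamma\in(0,1]$, $\varepsilon\in(0,1]$ and $n\ge C\,k^3/(\gamma^2\varepsilon^4)$, there exists a symmetric private-coin $\varepsilon$-LDP protocol with $n$ users, each holding an i.i.d. sample from an unknown $p\in\Delta([k]\times[k])$, whose curator outputs ``independent'' with probability at least $2/3$ if $p$ is a product distribution and ``not independent'' with probability at least $2/3$ if $p$ is $\gamma$-far from every product distribution.
   Context: $\Delta(\Omega)$ is the set of probability distributions on a finite set $\Omega$; $d_{TV}(p,q)=\frac12\|p-q\|_1$. A distribution on $[k]\times[k]$ is a product distribution if it equals $p_1\otimes p_2$, $(p_1\otimes p_2)(x_1,x_2)=p_1(x_1)p_2(x_2)$, for some $p_1,p_2\in\Delta([k])$; $p$ is $\gamma$-far from product if $d_{TV}(p,q)>\gamma$ for every product distribution $q$. Protocol model: user $j$ holds $X_j$, $X_1,\dots,X_n$ i.i.d. from $p$; each user sends $Z_j\sim W(\cdot\mid X_j)$ for a channel $W$ into a finite set, independently across users (private-coin, symmetric: the same $W$ for all users), and the curator outputs a possibly randomized function of $(Z_1,\dots,Z_n)$. $\varepsilon$-LDP means $W(z\mid x)\le e^\varepsilon W(z\mid x')$ for all $z,x,x'$. *)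

From mathcomp Require Import all_boot.
From Stdlib Require Import Reals.

Set Implicit Arguments. Unset Strict Implicit. Unset Printing Implicit Defensive.
Open Scope R_scope.

Definition rsum (T : finType) (f : T -> R) : R := \big[Rplus/R0]_(t : T) f t.
Definition rprod (n : nat) (f : 'I_n -> R) : R := \big[Rmult/R1]_(j < n) f j.

Definition is_distr (T : finType) (p : T -> R) : Prop :=
  (forall t, 0 <= p t) /\ rsum p = 1.

Definition dTV (T : finType) (p q : T -> R) : R :=
  / 2 * rsum (fun t => Rabs (p t - q t)).

Definition pair_dom (k : nat) : finType := ('I_k * 'I_k)%type.

Definition is_product (k : nat) (p : pair_dom k -> R) : Prop :=
  exists p1 p2 : 'I_k -> R, is_distr p1 /\ is_distr p2 /\
    forall x : pair_dom k, p x = p1 x.1 * p2 x.2.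

Definition far_from_product (k : nat) (gamma : R) (p : pair_dom k -> R) : Prop :=
  forall q : pair_dom k -> R, is_distr q -> is_product q -> dTV p q > gamma.

Definition is_channel (X Z : finType) (W : X -> Z -> R) : Prop :=
  (forall x z, 0 <= W x z) /\ (forall x, rsum (W x) = 1).

Definition is_LDP (X Z : finType) (eps : R) (W : X -> Z -> R) : Prop :=
  forall z x x', W x z <= exp eps * W x' z.

(* Probability that the curator outputs "independent": users j < n hold
   i.i.d. X_j ~ p, send Z_j ~ W(.|X_j) independently; the (randomized)
   curator, given messages z, outputs "independent" with probability A z
   and "not independent" with probability 1 - A z. *)
Definition prob_indep (X Z : finType) (n : nat) (p : X -> R) (W : X -> Z -> R)
  (A : {ffun 'I_n -> Z} -> R) : R :=
  rsum (fun z : {ffun 'I_n -> Z} =>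
          rprod (fun j : 'I_n => rsum (fun x => p x * W x (z j))) * A z).

(* Each user reports its pair (x1, x2) through two independent k-ary
   randomized responses: coordinate i of the bit vector sent for x1 is the
   indicator [i = x1], kept with probability (1 + c) / 2, where c = eps / 16;
   a likelihood ratio is at most ((1 + c) / (1 - c))^4 <= e^eps.  After
   centering, the bits of one report have means c [i = x1] and are
   uncorrelated across coordinates, so a block of three users (u, v, w) yields
   the unbiased estimate u1(i) u2(j) - v1(i) w2(j) of c^2 (p(i,j) - p1(i) p2(j)).
   Summing these estimates over m disjoint blocks in each of two halves of the
   users and taking the inner product of the two sums gives a statistic S with
   mean m^2 g, g = c^4 |p - p1 x p2|_2^2, and variance O(m^3 g + m^2 k^2).
   A gamma-far p is at l1 distance above 2 gamma from p1 x p2, hence at l2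
   distance above 2 gamma / k, so thresholding S at m^2 c^4 (2 gamma / k)^2 / 2
   errs with probability at most 1/3 by Chebyshev's inequality once
   n = 6 m + O(1) >= C k^3 / (gamma^2 eps^4). *)

From HB Require Import structures.
From mathcomp Require Import all_boot zify.
From Stdlib Require Import Reals Lra.
Open Scope R_scope.
Set Implicit Arguments. Unset Strict Implicit. Unset Printing Implicit Defensive.

HB.instance Definition _ := Monoid.isComLaw.Build R R0 Rplus
  (fun a b c => esym (Rplus_assoc a b c)) Rplus_comm Rplus_0_l.
HB.instance Definition _ := Monoid.isComLaw.Build R R1 Rmult
  (fun a b c => esym (Rmult_assoc a b c)) Rmult_comm Rmult_1_l.
HB.instance Definition _ := Monoid.isMulLaw.Build R R0 Rmult Rmult_0_l Rmult_0_r.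
HB.instance Definition _ :=
  Monoid.isAddLaw.Build R Rmult Rplus Rmult_plus_distr_r Rmult_plus_distr_l.

Lemma ler_rsum (T : finType) (P : pred T) (f g : T -> R) :
  (forall t, P t -> f t <= g t) ->
  \big[Rplus/R0]_(t | P t) f t <= \big[Rplus/R0]_(t | P t) g t.
Proof. by move=> fg; apply: (big_ind2 (fun a b => a <= b)) => // *; lra. Qed.

Lemma rsum_ge0 (T : finType) (P : pred T) (f : T -> R) :
  (forall t, P t -> 0 <= f t) -> 0 <= \big[Rplus/R0]_(t | P t) f t.
Proof. by move=> f0; apply: (big_ind (fun a => 0 <= a)) => // *; lra. Qed.

Lemma rprod_ge0 (T : finType) (P : pred T) (f : T -> R) :
  (forall t, P t -> 0 <= f t) -> 0 <= \big[Rmult/R1]_(t | P t) f t.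
Proof. by move=> f0; apply: (big_ind (fun a => 0 <= a)) => // *; nra. Qed.

Lemma ler_rsum_term (T : finType) (f : T -> R) i :
  (forall j, 0 <= f j) -> f i <= \big[Rplus/R0]_j f j.
Proof.
move=> f0; rewrite (bigD1 i) //=.
have := rsum_ge0 (P := fun j => j != i) (fun j _ => f0 j); lra.
Qed.

Lemma rsum_pred1 (T : finType) (y : T) (F : T -> R) :
  \big[Rplus/R0]_x (if y == x then F x else 0) = F y.
Proof. by rewrite -big_mkcond (big_pred1 y) // => x; rewrite /= eq_sym. Qed.

Lemma rsumN (T : finType) (F : T -> R) :
  \big[Rplus/R0]_t (- F t) = - \big[Rplus/R0]_t F t.
Proof. by rewrite (big_morph Ropp Ropp_plus_distr Ropp_0). Qed.

Lemma rsumB (T : finType) (F G : T -> R) :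
  \big[Rplus/R0]_t (F t - G t) = \big[Rplus/R0]_t F t - \big[Rplus/R0]_t G t.
Proof. by rewrite big_split /= rsumN. Qed.

Lemma rsum_const (T : finType) (c : R) : \big[Rplus/R0]_(t : T) c = INR #|T| * c.
Proof.
rewrite big_const; elim: #|T| => [|n IH]; first by rewrite /= Rmult_0_l.
by rewrite iterS IH S_INR; ring.
Qed.

Lemma rsum_pair (k : nat) (F : pair_dom k -> R) :
  \big[Rplus/R0]_x F x = \big[Rplus/R0]_a \big[Rplus/R0]_b F (a, b).
Proof. by rewrite (pair_big xpredT xpredT (fun a b => F (a, b))); apply: eq_bigr => -[]. Qed.

Section DoubleSums.
Variable T : finType.

Lemma rsum2D (F G : T -> T -> R) :
  \big[Rplus/R0]_i \big[Rplus/R0]_j (F i j + G i j) =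
  \big[Rplus/R0]_i \big[Rplus/R0]_j F i j + \big[Rplus/R0]_i \big[Rplus/R0]_j G i j.
Proof. by rewrite -big_split; apply: eq_bigr => i _; rewrite -big_split. Qed.

Lemma rsum2Z (F : T -> T -> R) a :
  \big[Rplus/R0]_i \big[Rplus/R0]_j (a * F i j) = a * \big[Rplus/R0]_i \big[Rplus/R0]_j F i j.
Proof. by rewrite big_distrr; apply: eq_bigr => i _; rewrite big_distrr. Qed.

Lemma rsum2M (f g : T -> R) :
  \big[Rplus/R0]_i \big[Rplus/R0]_j (f i * g j) = \big[Rplus/R0]_i f i * \big[Rplus/R0]_j g j.
Proof. by rewrite big_distrl /=; apply: eq_bigr => i _; rewrite big_distrr. Qed.

Lemma rsum_sqr_le (f : T -> R) :
  \big[Rplus/R0]_i f i * \big[Rplus/R0]_i f i <= INR #|T| * \big[Rplus/R0]_i (f i * f i).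
Proof.
have expand i j : (f i - f j) * (f i - f j) =
    f i * f i + (f j * f j + (-2) * (f i * f j)) by ring.
have : 0 <= \big[Rplus/R0]_i \big[Rplus/R0]_j ((f i - f j) * (f i - f j)).
  by apply: rsum_ge0 => i _; apply: rsum_ge0 => j _; exact: Rle_0_sqr.
under eq_bigr => i _ do under eq_bigr => j _ do rewrite expand.
rewrite !rsum2D rsum2Z rsum2M rsum_const.
under eq_bigr => i _ do rewrite rsum_const.
rewrite -big_distrr /=; lra.
Qed.

End DoubleSums.

Section Mean.
Variables (X : finType) (w : X -> R).
Hypothesis w_ge0 : forall x, 0 <= w x.
Hypothesis w_sum1 : \big[Rplus/R0]_x w x = 1.

Definition mean (f : X -> R) : R := \big[Rplus/R0]_x (w x * f x).

Lemma eq_mean (f g : X -> R) : f =1 g -> mean f = mean g.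
Proof. by move=> fg; apply: eq_bigr => x _; rewrite fg. Qed.

Lemma meanD (f g : X -> R) : mean (fun x => f x + g x) = mean f + mean g.
Proof. by rewrite /mean -big_split; apply: eq_bigr => x _ /=; ring. Qed.

Lemma meanZ a (f : X -> R) : mean (fun x => a * f x) = a * mean f.
Proof. by rewrite /mean big_distrr; apply: eq_bigr => x _ /=; ring. Qed.

Lemma meanMr (f : X -> R) a : mean (fun x => f x * a) = mean f * a.
Proof. by rewrite Rmult_comm -meanZ; apply: eq_mean => x; ring. Qed.

Lemma meanB (f g : X -> R) : mean (fun x => f x - g x) = mean f - mean g.
Proof. by rewrite /mean -rsumB; apply: eq_bigr => x _ /=; ring. Qed.

Lemma mean_sum (I : finType) (F : I -> X -> R) :
  mean (fun x => \big[Rplus/R0]_i F i x) = \big[Rplus/R0]_i mean (F i).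
Proof. by rewrite /mean exchange_big; apply: eq_bigr => x _; rewrite big_distrr. Qed.

Lemma mean_const a : mean (fun _ => a) = a.
Proof. by rewrite /mean -big_distrl /= w_sum1 Rmult_1_l. Qed.

Lemma ler_mean (f g : X -> R) : (forall x, f x <= g x) -> mean f <= mean g.
Proof. by move=> fg; apply: ler_rsum => x _; apply: Rmult_le_compat_l. Qed.

Lemma mean_01 (f : X -> R) : (forall x, 0 <= f x <= 1) -> 0 <= mean f <= 1.
Proof.
move=> f01; split; [rewrite -(mean_const 0) | rewrite -(mean_const 1)];
  by apply: ler_mean => x; case: (f01 x).
Qed.

Definition mean3 (F : X -> X -> X -> R) : R :=
  mean (fun x => mean (fun y => mean (fun v => F x y v))).

Lemma eq_mean3 (F G : X -> X -> X -> R) :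
  (forall x y v, F x y v = G x y v) -> mean3 F = mean3 G.
Proof. by move=> FG; do 3![apply: eq_mean => ?]; apply: FG. Qed.

Lemma mean3B (F G : X -> X -> X -> R) :
  mean3 (fun x y v => F x y v - G x y v) = mean3 F - mean3 G.
Proof.
rewrite /mean3 -meanB; apply: eq_mean => x; rewrite -meanB.
by apply: eq_mean => y; rewrite -meanB.
Qed.

Lemma mean3D (F G : X -> X -> X -> R) :
  mean3 (fun x y v => F x y v + G x y v) = mean3 F + mean3 G.
Proof.
rewrite /mean3 -meanD; apply: eq_mean => x; rewrite -meanD.
by apply: eq_mean => y; rewrite -meanD.
Qed.

Lemma mean3M (f g h : X -> R) :
  mean3 (fun x y v => f x * (g y * h v)) = mean f * (mean g * mean h).
Proof.
rewrite /mean3; under eq_mean => x do under eq_mean => y do rewrite meanZ meanZ.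
by under eq_mean => x do rewrite meanZ meanMr; rewrite meanMr.
Qed.

Lemma mean3_diff (f g h : X -> R) :
  mean3 (fun x y v => f x - g y * h v) = mean f - mean g * mean h.
Proof.
rewrite (@eq_mean3 _ (fun x y v => f x * (1 * 1) - 1 * (g y * h v))); last by move=> *; ring.
by rewrite mean3B !mean3M !mean_const; ring.
Qed.

Lemma mean3_diffM (I : Type) (f g h : I -> X -> R) i j :
  mean3 (fun x y v => (f i x - g i y * h i v) * (f j x - g j y * h j v)) =
  mean (fun x => f i x * f j x) - mean (f i) * (mean (g j) * mean (h j))
  - mean (f j) * (mean (g i) * mean (h i))
  + mean (fun y => g i y * g j y) * mean (fun v => h i v * h j v).
Proof.
rewrite (@eq_mean3 _ (fun x y v =>
    (f i x * f j x) * (1 * 1) - f i x * (g j y * h j v) - f j x * (g i y * h i v)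
    + 1 * ((g i y * g j y) * (h i v * h j v)))); last by move=> x y v; ring.
rewrite mean3D !mean3B !mean3M !mean_const; ring.
Qed.

End Mean.

Section ProductMeasure.
Variables (T X : finType) (q : T -> X -> R).
Hypothesis q_sum1 : forall j, \big[Rplus/R0]_x q j x = 1.

Definition prod_weight (z : {ffun T -> X}) : R := \big[Rmult/R1]_j q j (z j).

Local Notation E := (mean prod_weight).

Lemma prod_weight_ge0 : (forall j x, 0 <= q j x) -> forall z, 0 <= prod_weight z.
Proof. by move=> q_ge0 z; apply: rprod_ge0. Qed.

Lemma prod_weight_sum1 : \big[Rplus/R0]_z prod_weight z = 1.
Proof. by rewrite /prod_weight -bigA_distr_bigA big1 // => j _; exact: q_sum1. Qed.

Lemma mean_prod_coord j (h : X -> R) : E (fun z => h (z j)) = mean (q j) h.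
Proof.
pose g i x := if i == j then q i x * h x else q i x.
have gE z : prod_weight z * h (z j) = \big[Rmult/R1]_i g i (z i).
  rewrite /prod_weight (bigD1 j) //= [in RHS](bigD1 j) //= /g eqxx.
  rewrite [in RHS](eq_bigr (fun i => q i (z i))); first by ring.
  by move=> i /negbTE ->.
rewrite /mean (eq_bigr _ (fun z _ => gE z)) -bigA_distr_bigA (bigD1 j) //=.
rewrite [X in _ * X]big1; first by rewrite Rmult_1_r /g; apply: eq_bigr => x _; rewrite eqxx.
by move=> i /negbTE ji; rewrite /g ji q_sum1.
Qed.

Definition depends_on (P : pred T) (f : {ffun T -> X} -> R) :=
  forall z z' : {ffun T -> X}, (forall j, P j -> z j = z' j) -> f z = f z'.

Lemma depends_on_sub (P P' : pred T) f :
  (forall j, P j -> P' j) -> depends_on P f -> depends_on P' f.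
Proof. by move=> PP' f_dep z z' zz'; apply: f_dep => j /PP'; apply: zz'. Qed.

Lemma depends_onM (P : pred T) f g :
  depends_on P f -> depends_on P g -> depends_on P (fun z => f z * g z).
Proof. by move=> f_dep g_dep z z' zz'; rewrite (f_dep z z' zz') (g_dep z z' zz'). Qed.

Lemma depends_on_sum (P : pred T) (I : finType) (F : I -> {ffun T -> X} -> R) :
  (forall i, depends_on P (F i)) -> depends_on P (fun z => \big[Rplus/R0]_i F i z).
Proof. by move=> F_dep z z' zz'; apply: eq_bigr => i _; apply: F_dep. Qed.

Definition merge (P : pred T) (z y : {ffun T -> X}) : {ffun T -> X} :=
  [ffun j => if P j then z j else y j].

(* Exchanging the P-coordinates of two independent samples preserves the
   joint weight, which decouples f and g. *)
Lemma mean_prod_indep (P : pred T) f g :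
  depends_on P f -> depends_on (predC P) g -> E (fun z => f z * g z) = E f * E g.
Proof.
move=> f_dep g_dep.
pose swap (zy : {ffun T -> X} * {ffun T -> X}) := (merge P zy.1 zy.2, merge P zy.2 zy.1).
have swapK : involutive swap.
  by case=> z y; congr pair; apply/ffunP => j; rewrite !ffunE; case: (P j).
have swap_weight z y :
    prod_weight (merge P z y) * prod_weight (merge P y z) = prod_weight z * prod_weight y.
  rewrite /prod_weight -!big_split /=; apply: eq_bigr => j _; rewrite !ffunE.
  by case: (P j) => //; ring.
have -> : E f * E g = \big[Rplus/R0]_z \big[Rplus/R0]_y
    (prod_weight z * prod_weight y * (f z * g y)).
  rewrite /mean big_distrl; apply: eq_bigr => z _.
  by rewrite big_distrr /=; apply: eq_bigr => y _; ring.
have -> : E (fun z => f z * g z) = \big[Rplus/R0]_z \big[Rplus/R0]_y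
    (prod_weight z * prod_weight y * (f z * g z)).
  apply: eq_bigr => z _.
  rewrite -[LHS]Rmult_1_r -prod_weight_sum1 big_distrr /=.
  by apply: eq_bigr => y _; ring.
rewrite !pair_bigA /=.
rewrite (reindex_inj (can_inj swapK)); apply: eq_bigr => -[z y] _ /=.
rewrite swap_weight; congr (_ * (_ * _)).
  by apply: f_dep => j Pj; rewrite ffunE Pj.
by apply: g_dep => j /= Pj; rewrite ffunE (negbTE Pj).
Qed.

Lemma mean_prod_condition j (G : X -> {ffun T -> X} -> R) :
  (forall x, depends_on (predC (pred1 j)) (G x)) ->
  E (fun z => G (z j) z) = mean (q j) (fun x => E (G x)).
Proof.
move=> G_dep; pose hit (x y : X) : R := if y == x then 1 else 0.
rewrite (@eq_mean _ _ _ (fun z : {ffun T -> X} => \big[Rplus/R0]_x (hit x (z j) * G x z)));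
  last first.
  move=> z; rewrite /hit (bigD1 (z j)) //= eqxx big1 ?Rplus_0_r; first ring.
  by move=> x; rewrite eq_sym => /negbTE ->; ring.
rewrite mean_sum; apply: eq_bigr => x _.
rewrite (@mean_prod_indep (pred1 j)); last exact: G_dep; last first.
  by move=> z z' zz'; rewrite (zz' j (eqxx j)).
rewrite mean_prod_coord /mean (bigD1 x) //= /hit eqxx big1 ?Rplus_0_r; first ring.
by move=> y /negbTE ->; ring.
Qed.

End ProductMeasure.

Section TripleBlocks.
Variables (X : finType) (q : X -> R).
Hypothesis q_sum1 : \big[Rplus/R0]_x q x = 1.
Variables (N m : nat).
Hypothesis six_m_le : (6 * m <= N.+1)%nat.
Variables (I : finType) (Y : X -> X -> X -> I -> R).

Local Notation user := 'I_N.+1.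
Local Notation E := (mean (prod_weight (fun _ : user => q))).

Let q_sum1' : forall _ : user, \big[Rplus/R0]_x q x = 1. Proof. by []. Qed.

Definition block_user (b r : nat) : user := inord (b * 3 + r).

Definition in_block (b : nat) : pred user := fun j => (j %/ 3 == b)%nat.

Definition block_stat (b : nat) (i : I) (z : {ffun user -> X}) : R :=
  Y (z (block_user b 0)) (z (block_user b 1)) (z (block_user b 2)) i.

Definition block_mean (i : I) : R := mean3 q (fun x y v => Y x y v i).

Definition block_moment (i j : I) : R := mean3 q (fun x y v => Y x y v i * Y x y v j).

Lemma block_userE b r : (b < 2 * m)%nat -> (r < 3)%nat ->
  nat_of_ord (block_user b r) = (b * 3 + r)%nat.
Proof. by move=> ltb ltr; rewrite /block_user inordK //; lia. Qed.

Lemma block_user_inj b r r' : (b < 2 * m)%nat -> (r < 3)%nat -> (r' < 3)%nat ->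
  r <> r' -> block_user b r != block_user b r'.
Proof.
move=> ltb ltr ltr' neq; apply/eqP => /(congr1 (@nat_of_ord _)).
by rewrite !block_userE //; lia.
Qed.

Lemma block_stat_depends b i : (b < 2 * m)%nat -> depends_on (in_block b) (block_stat b i).
Proof.
by move=> ltb z z' zz'; rewrite /block_stat !zz' //= /in_block block_userE //; lia.
Qed.

Lemma mean_block b (F : X -> X -> X -> R) : (b < 2 * m)%nat ->
  E (fun z => F (z (block_user b 0)) (z (block_user b 1)) (z (block_user b 2))) = mean3 q F.
Proof.
move=> ltb.
rewrite (mean_prod_condition q_sum1' (j := block_user b 0)
    (G := fun x z => F x (z (block_user b 1)) (z (block_user b 2)))); last first.
  move=> x z z' zz'; rewrite (zz' (block_user b 1)) ?(zz' (block_user b 2)) //=;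
  exact: block_user_inj.
apply: eq_mean => x; rewrite (mean_prod_condition q_sum1' (j := block_user b 1)
    (G := fun y z => F x y (z (block_user b 2)))); last first.
  by move=> y z z' zz'; rewrite (zz' (block_user b 2)) //=; exact: block_user_inj.
by apply: eq_mean => y; rewrite (mean_prod_coord q_sum1' (block_user b 2)).
Qed.

Lemma mean_block_stat b i : (b < 2 * m)%nat -> E (block_stat b i) = block_mean i.
Proof. by move=> ltb; exact: (mean_block (fun x y v => Y x y v i)). Qed.

Lemma mean_block_statM b b' i j : (b < 2 * m)%nat -> (b' < 2 * m)%nat ->
  E (fun z => block_stat b i z * block_stat b' j z) =
  if b == b' then block_moment i j else block_mean i * block_mean j.
Proof.
move=> ltb ltb'; case: eqP => [<-|neq].
  exact: (mean_block (fun x y v => Y x y v i * Y x y v j)).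
rewrite (@mean_prod_indep _ _ _ q_sum1' (in_block b)) ?mean_block_stat //.
  exact: block_stat_depends.
apply: depends_on_sub (block_stat_depends j ltb') => u; rewrite /in_block /= => /eqP ->.
by apply/eqP => eqb; apply: neq.
Qed.

Definition group_stat (o : nat) (i : I) (z : {ffun user -> X}) : R :=
  \big[Rplus/R0]_(b < m) block_stat (o + b) i z.

Definition group_moment (i j : I) : R :=
  INR m * (INR m * (block_mean i * block_mean j)
           + (block_moment i j - block_mean i * block_mean j)).

Lemma mean_group_stat o i : (o <= m)%nat -> E (group_stat o i) = INR m * block_mean i.
Proof.
move=> le_o; rewrite mean_sum (eq_bigr (fun _ => block_mean i)) ?rsum_const ?card_ord //.
by move=> b _; apply: mean_block_stat; have := ltn_ord b; lia.
Qed.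

Lemma mean_group_statM o i j : (o <= m)%nat ->
  E (fun z => group_stat o i z * group_stat o j z) = group_moment i j.
Proof.
move=> le_o; rewrite (@eq_mean _ _ _ (fun z => \big[Rplus/R0]_(b < m) \big[Rplus/R0]_(b' < m)
    (block_stat (o + b) i z * block_stat (o + b') j z))); last first.
  by move=> z; rewrite /group_stat big_distrl; apply: eq_bigr => b _; rewrite big_distrr.
rewrite mean_sum (eq_bigr (fun _ => INR m * (block_mean i * block_mean j)
    + (block_moment i j - block_mean i * block_mean j))); first by rewrite rsum_const card_ord.
move=> b _; rewrite mean_sum (eq_bigr (fun b' : 'I_m => block_mean i * block_mean j
    + (if b == b' then block_moment i j - block_mean i * block_mean j else 0))).
  by rewrite big_split /= rsum_pred1 rsum_const card_ord.
move=> b' _; rewrite mean_block_statM; try (have := ltn_ord b; have := ltn_ord b'; lia).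
by rewrite eqn_add2l val_eqE; case: ifP => _; ring.
Qed.

Definition first_half : pred user := fun j => (j %/ 3 < m)%nat.

Lemma group_stat0_depends i : depends_on first_half (group_stat 0 i).
Proof.
apply: depends_on_sum => b; apply: depends_on_sub (block_stat_depends i _).
  by move=> u; rewrite /in_block /first_half => /eqP ->; rewrite add0n.
by have := ltn_ord b; lia.
Qed.

Lemma group_statm_depends i : depends_on (predC first_half) (group_stat m i).
Proof.
apply: depends_on_sum => b; apply: depends_on_sub (block_stat_depends i _).
  by move=> u; rewrite /in_block /first_half /= => /eqP ->; rewrite -leqNgt leq_addr.
by have := ltn_ord b; lia.
Qed.

Definition stat (z : {ffun user -> X}) : R :=
  \big[Rplus/R0]_i (group_stat 0 i z * group_stat m i z).

Lemma mean_stat : E stat = \big[Rplus/R0]_i ((INR m * block_mean i) * (INR m * block_mean i)).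
Proof.
rewrite mean_sum; apply: eq_bigr => i _.
rewrite (mean_prod_indep q_sum1' (group_stat0_depends i) (group_statm_depends i)).
by rewrite !mean_group_stat.
Qed.

Lemma mean_stat_sqr :
  E (fun z => stat z * stat z) =
  \big[Rplus/R0]_i \big[Rplus/R0]_j (group_moment i j * group_moment i j).
Proof.
rewrite (@eq_mean _ _ _ (fun z => \big[Rplus/R0]_i \big[Rplus/R0]_j
    ((group_stat 0 i z * group_stat 0 j z) * (group_stat m i z * group_stat m j z)))).
  rewrite mean_sum; apply: eq_bigr => i _; rewrite mean_sum; apply: eq_bigr => j _.
  rewrite (@mean_prod_indep _ _ _ q_sum1' first_half).
  - by rewrite !mean_group_statM.
  - by apply: depends_onM; exact: group_stat0_depends.
  - by apply: depends_onM; exact: group_statm_depends.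
move=> z; rewrite /stat big_distrl; apply: eq_bigr => i _.
by rewrite big_distrr; apply: eq_bigr => j _ /=; ring.
Qed.

End TripleBlocks.

Section RandomizedResponse.
Variables (k : nat) (c : R).
Hypothesis c_ge0 : 0 <= c.
Hypothesis c_lt1 : c < 1.

Definition keep_prob : R := (1 + c) / 2.

Definition flip (b x : bool) : R := if b == x then keep_prob else 1 - keep_prob.

Definition rr_coord (a i : 'I_k) (b : bool) : R := flip b (i == a).

Definition rr (a : 'I_k) (s : {ffun 'I_k -> bool}) : R := prod_weight (rr_coord a) s.

Definition centered_bit (s : {ffun 'I_k -> bool}) (i : 'I_k) : R :=
  (if s i then 1 else 0) - (1 - keep_prob).

Lemma flip_ge0 b x : 0 <= flip b x.
Proof. by rewrite /flip /keep_prob; case: eqP => _; lra. Qed.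

Lemma rr_coord_sum1 a i : \big[Rplus/R0]_b rr_coord a i b = 1.
Proof. by rewrite big_bool /rr_coord /flip /keep_prob; case: (i == a) => /=; lra. Qed.

Lemma rr_ge0 a s : 0 <= rr a s.
Proof. by apply: prod_weight_ge0 => i b; exact: flip_ge0. Qed.

Lemma rr_sum1 a : \big[Rplus/R0]_s rr a s = 1.
Proof. exact: prod_weight_sum1 (rr_coord_sum1 a). Qed.

Lemma mean_centered_bit a i : mean (rr a) (centered_bit^~ i) = if i == a then c else 0.
Proof.
rewrite (mean_prod_coord (rr_coord_sum1 a) i (fun b => (if b then 1 else 0) - (1 - keep_prob))).
by rewrite /mean big_bool /rr_coord /flip /keep_prob; case: (i == a) => /=; field.
Qed.

Lemma mean_centered_bitM a i i' : i != i' ->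
  mean (rr a) (fun s => centered_bit s i * centered_bit s i') = 0.
Proof.
move=> neq; rewrite (@mean_prod_indep _ _ _ (rr_coord_sum1 a) (pred1 i)).
- rewrite !mean_centered_bit; case: (eqVneq i a) => [eq_ia|]; last by rewrite Rmult_0_l.
  by move: neq; rewrite eq_ia eq_sym => /negbTE ->; rewrite Rmult_0_r.
- by move=> z z' zz'; rewrite /centered_bit (zz' i (eqxx i)).
- by move=> z z' zz'; rewrite /centered_bit (zz' i') //= eq_sym.
Qed.

Lemma mean_centered_bit_sqr01 a i :
  0 <= mean (rr a) (fun s => centered_bit s i * centered_bit s i) <= 1.
Proof.
apply: mean_01 => [s||s]; [exact: rr_ge0 | exact: rr_sum1 |].
by rewrite /centered_bit /keep_prob; case: (s i); split; nra.
Qed.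

Definition rr_ratio : R := (1 + c) / (1 - c).

Lemma rr_ratio_ge1 : 1 <= rr_ratio.
Proof.
rewrite /rr_ratio (_ : (1 + c) / (1 - c) = 1 + 2 * c * / (1 - c)); last by field; lra.
have : 0 < / (1 - c) by apply: Rinv_0_lt_compat; lra.
nra.
Qed.

Lemma rr_input_factor a s :
  rr a s = \big[Rmult/R1]_i flip (s i) false * (if s a then rr_ratio else / rr_ratio).
Proof.
rewrite /rr /prod_weight (bigD1 a) //= [in RHS](bigD1 a) //= /rr_coord eqxx.
rewrite (eq_bigr (fun i => flip (s i) false)); last by move=> i /negbTE ->.
by rewrite /flip /rr_ratio /keep_prob; case: (s a) => /=; field; lra.
Qed.

Lemma rr_LDP a a' s : rr a s <= rr_ratio * rr_ratio * rr a' s.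
Proof.
rewrite !rr_input_factor -Rmult_assoc (Rmult_comm (rr_ratio * rr_ratio)) Rmult_assoc.
apply: Rmult_le_compat_l; first by apply: rprod_ge0 => i _; exact: flip_ge0.
have ratio_ge1 := rr_ratio_ge1.
have inv_le1 : / rr_ratio <= 1 by rewrite -Rinv_1; apply: Rinv_le_contravar; lra.
have inv_ratio : rr_ratio * rr_ratio * / rr_ratio = rr_ratio by field; lra.
have factor_ge b : / rr_ratio <= (if b then rr_ratio else / rr_ratio) by case: b; lra.
have factor_le b : (if b then rr_ratio else / rr_ratio) <= rr_ratio by case: b; lra.
apply: Rle_trans (factor_le (s a)) _; rewrite -{1}inv_ratio.
by apply: Rmult_le_compat_l; [nra | exact: factor_ge].
Qed.

End RandomizedResponse.

Section PairChannel.
Variables (k : nat) (c : R).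
Hypothesis c_ge0 : 0 <= c.
Hypothesis c_lt1 : c < 1.

Definition bits := {ffun 'I_k -> bool}.
Definition message := (bits * bits)%type.

Definition channel (x : pair_dom k) (z : message) : R := rr c x.1 z.1 * rr c x.2 z.2.

Lemma channel_ge0 x z : 0 <= channel x z.
Proof. by apply: Rmult_le_pos; apply: rr_ge0; lra. Qed.

Lemma channel_sum1 x : \big[Rplus/R0]_z channel x z = 1.
Proof.
rewrite -(pair_big xpredT xpredT (fun a b => rr c x.1 a * rr c x.2 b)) /=.
under eq_bigr => a _ do rewrite -big_distrr /= rr_sum1 Rmult_1_r.
exact: rr_sum1.
Qed.

Lemma channel_LDP x x' z :
  channel x z <= rr_ratio c * rr_ratio c * (rr_ratio c * rr_ratio c) * channel x' z.
Proof.
have LDP1 := rr_LDP c_ge0 c_lt1 x.1 x'.1 z.1; have LDP2 := rr_LDP c_ge0 c_lt1 x.2 x'.2 z.2.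
rewrite /channel (_ : forall a b d e : R, a * b * (d * e) = (a * d) * (b * e)); last by move=> *; ring.
by apply: Rmult_le_compat => //; apply: rr_ge0; lra.
Qed.

Variable p : pair_dom k -> R.
Hypothesis p_ge0 : forall x, 0 <= p x.
Hypothesis p_sum1 : \big[Rplus/R0]_x p x = 1.

Definition message_law (z : message) : R := mean p (channel^~ z).

Definition marg1 (a : 'I_k) : R := \big[Rplus/R0]_b p (a, b).
Definition marg2 (b : 'I_k) : R := \big[Rplus/R0]_a p (a, b).

Definition bit_moment (a i i' : 'I_k) : R :=
  mean (rr c a) (fun s => centered_bit c s i * centered_bit c s i').

Lemma message_law_ge0 z : 0 <= message_law z.
Proof. by apply: rsum_ge0 => x _; apply: Rmult_le_pos => //; exact: channel_ge0. Qed.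

Lemma message_law_sum1 : \big[Rplus/R0]_z message_law z = 1.
Proof.
rewrite /message_law /mean exchange_big /= -p_sum1; apply: eq_bigr => x _.
by rewrite -big_distrr /= channel_sum1 Rmult_1_r.
Qed.

Lemma mean_message_law (h1 h2 : bits -> R) :
  mean message_law (fun z => h1 z.1 * h2 z.2) =
  mean p (fun x => mean (rr c x.1) h1 * mean (rr c x.2) h2).
Proof.
rewrite /mean /message_law.
under eq_bigr => z _ do rewrite /mean big_distrl.
rewrite exchange_big /=; apply: eq_bigr => x _.
under eq_bigr => z _ do rewrite Rmult_assoc.
rewrite -big_distrr /=; congr (_ * _).
rewrite -(pair_big xpredT xpredT (fun a b => channel x (a, b) * (h1 a * h2 b))) /=.
rewrite big_distrl; apply: eq_bigr => a _ /=; rewrite big_distrr; apply: eq_bigr => b _ /=.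
by rewrite /channel /=; ring.
Qed.

Lemma mean_message_law1 (h : bits -> R) :
  mean message_law (fun z => h z.1) = mean p (fun x => mean (rr c x.1) h).
Proof.
rewrite (@eq_mean _ _ _ (fun z => h z.1 * 1)); last by move=> z; ring.
by rewrite (mean_message_law h (fun _ => 1)); apply: eq_mean => x; rewrite mean_const ?rr_sum1 //; ring.
Qed.

Lemma mean_message_law2 (h : bits -> R) :
  mean message_law (fun z => h z.2) = mean p (fun x => mean (rr c x.2) h).
Proof.
rewrite (@eq_mean _ _ _ (fun z => 1 * h z.2)); last by move=> z; ring.
by rewrite (mean_message_law (fun _ => 1) h); apply: eq_mean => x; rewrite mean_const ?rr_sum1 //; ring.
Qed.

Local Notation cbit := (centered_bit c).

Definition triple_stat (z1 z2 z3 : message) (I : pair_dom k) : R :=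
  cbit z1.1 I.1 * cbit z1.2 I.2 - cbit z2.1 I.1 * cbit z3.2 I.2.

Definition joint_part (I : pair_dom k) : R := c * c * p I.
Definition product_part (I : pair_dom k) : R := c * marg1 I.1 * (c * marg2 I.2).

Definition joint_moment (I J : pair_dom k) : R :=
  mean p (fun x => bit_moment x.1 I.1 J.1 * bit_moment x.2 I.2 J.2).
Definition product_moment (I J : pair_dom k) : R :=
  mean p (fun x => bit_moment x.1 I.1 J.1) * mean p (fun x => bit_moment x.2 I.2 J.2).

Lemma mean_cbit1 i : mean message_law (fun z => cbit z.1 i) = c * marg1 i.
Proof.
rewrite (mean_message_law1 (cbit^~ i)); under eq_mean => x do rewrite mean_centered_bit.
rewrite /mean rsum_pair (eq_bigr (fun a => if i == a then c * marg1 a else 0)) ?rsum_pred1 //.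
move=> a _ /=; case: (i == a); last by rewrite big1 // => b _; ring.
by rewrite /marg1 big_distrr /=; apply: eq_bigr => b _; ring.
Qed.

Lemma mean_cbit2 j : mean message_law (fun z => cbit z.2 j) = c * marg2 j.
Proof.
rewrite (mean_message_law2 (cbit^~ j)); under eq_mean => x do rewrite mean_centered_bit.
rewrite /mean rsum_pair exchange_big /=.
rewrite (eq_bigr (fun b => if j == b then c * marg2 b else 0)) ?rsum_pred1 //.
move=> b _ /=; case: (j == b); last by rewrite big1 // => a _; ring.
by rewrite /marg2 big_distrr /=; apply: eq_bigr => a _; ring.
Qed.

Lemma mean_cbit12 I : mean message_law (fun z => cbit z.1 I.1 * cbit z.2 I.2) = joint_part I.
Proof.
rewrite (mean_message_law (cbit^~ I.1) (cbit^~ I.2)).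
under eq_mean => x do rewrite !mean_centered_bit.
rewrite /mean (eq_bigr (fun x => if I == x then c * c * p x else 0)) ?rsum_pred1 //.
move=> [a b] _; case: I => i j /=.
by rewrite xpair_eqE; case: (i == a); case: (j == b) => /=; ring.
Qed.

Lemma block_mean_triple I :
  block_mean message_law triple_stat I = joint_part I - product_part I.
Proof.
rewrite /block_mean /triple_stat.
by rewrite (mean3_diff message_law_sum1 (fun z => cbit z.1 I.1 * cbit z.2 I.2)
  (fun z => cbit z.1 I.1) (fun z => cbit z.2 I.2)) mean_cbit12 mean_cbit1 mean_cbit2.
Qed.

Lemma block_moment_triple I J :
  block_moment message_law triple_stat I J =
  joint_moment I J - joint_part I * product_part J - joint_part J * product_part I
  + product_moment I J.
Proof.
rewrite /block_moment /triple_stat.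
rewrite (mean3_diffM message_law_sum1 (fun I z => cbit z.1 I.1 * cbit z.2 I.2)
  (fun I z => cbit z.1 I.1) (fun I z => cbit z.2 I.2)) /=.
rewrite !mean_cbit12 !mean_cbit1 !mean_cbit2.
rewrite (@eq_mean _ _ _ (fun z => (fun s => cbit s I.1 * cbit s J.1) z.1
                              * (fun s => cbit s I.2 * cbit s J.2) z.2)); last by move=> z /=; ring.
rewrite (mean_message_law (fun s => cbit s I.1 * cbit s J.1) (fun s => cbit s I.2 * cbit s J.2)).
rewrite (mean_message_law1 (fun s => cbit s I.1 * cbit s J.1)).
by rewrite (mean_message_law2 (fun s => cbit s I.2 * cbit s J.2)).
Qed.

End PairChannel.

Section DiagonalForms.
Variable T : finType.

Definition diag01 (M : T -> T -> R) : Prop :=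
  (forall i j, i != j -> M i j = 0) /\ (forall i, 0 <= M i i <= 1).

Lemma rsum_diag (M : T -> T -> R) (F : T -> R) i : (forall j, i != j -> M i j = 0) ->
  \big[Rplus/R0]_j (F j * M i j) = F i * M i i.
Proof.
move=> M0; rewrite (bigD1 i) //= big1 ?Rplus_0_r // => j ji.
by rewrite M0 ?Rmult_0_r // eq_sym.
Qed.

Lemma diag01_sqr_sum (M : T -> T -> R) : diag01 M ->
  \big[Rplus/R0]_i \big[Rplus/R0]_j (M i j * M i j) <= INR #|T|.
Proof.
move=> [M0 M01]; rewrite -(Rmult_1_r (INR _)) -rsum_const; apply: ler_rsum => i _.
by rewrite (rsum_diag (M i) (M0 i)); have := M01 i; nra.
Qed.

Lemma diag01_quad (M : T -> T -> R) (u : T -> R) : diag01 M ->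
  \big[Rplus/R0]_i \big[Rplus/R0]_j (u i * u j * M i j) <= \big[Rplus/R0]_i (u i * u i).
Proof.
move=> [M0 M01]; apply: ler_rsum => i _; rewrite (rsum_diag (fun j => u i * u j) (M0 i)).
by have := M01 i; have := Rle_0_sqr (u i); rewrite /Rsqr; nra.
Qed.

End DiagonalForms.

Lemma rsum_sqr_le1 (T : finType) (e : T -> R) :
  (forall t, 0 <= e t) -> \big[Rplus/R0]_t e t <= 1 -> \big[Rplus/R0]_t (e t * e t) <= 1.
Proof.
move=> e0 e_le1; apply: Rle_trans (e_le1); apply: ler_rsum => t _.
by have := ler_rsum_term t e0; have := e0 t; nra.
Qed.

Lemma sqr_sum4_le a b c d :
  (a - b - c + d) * (a - b - c + d) <= 4 * (a * a + b * b + c * c + d * d).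
Proof.
have := Rle_0_sqr (a + b); have := Rle_0_sqr (a + c); have := Rle_0_sqr (a - d).
have := Rle_0_sqr (b - c); have := Rle_0_sqr (b + d); have := Rle_0_sqr (c + d).
by rewrite /Rsqr; lra.
Qed.

Section MomentBounds.
Variables (k : nat) (c : R).
Hypothesis c_ge0 : 0 <= c.
Hypothesis c_lt1 : c < 1.
Variable p : pair_dom k -> R.
Hypothesis p_ge0 : forall x, 0 <= p x.
Hypothesis p_sum1 : \big[Rplus/R0]_x p x = 1.

Local Notation marg1 := (marg1 p).
Local Notation marg2 := (marg2 p).
Local Notation joint_part := (joint_part c p).
Local Notation product_part := (product_part c p).
Local Notation moment := (block_moment (message_law c p) (triple_stat c)).

Definition gap (I : pair_dom k) : R := joint_part I - product_part I.
Definition gap_norm2 : R := \big[Rplus/R0]_I (gap I * gap I).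

Lemma marg1_sum1 : \big[Rplus/R0]_a marg1 a = 1.
Proof. by rewrite -p_sum1 rsum_pair. Qed.

Lemma marg2_sum1 : \big[Rplus/R0]_b marg2 b = 1.
Proof. by rewrite -p_sum1 rsum_pair exchange_big. Qed.

Lemma marg1_ge0 a : 0 <= marg1 a.
Proof. exact: rsum_ge0. Qed.

Lemma marg2_ge0 b : 0 <= marg2 b.
Proof. exact: rsum_ge0. Qed.

Lemma joint_part_ge0 I : 0 <= joint_part I.
Proof. by rewrite /joint_part; have := p_ge0 I; nra. Qed.

Lemma product_part_ge0 I : 0 <= product_part I.
Proof.
by apply: Rmult_le_pos; apply: Rmult_le_pos => //; [exact: marg1_ge0 | exact: marg2_ge0].
Qed.

Lemma joint_part_sum : \big[Rplus/R0]_I joint_part I = c * c.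
Proof. by rewrite /joint_part -big_distrr /= p_sum1 Rmult_1_r. Qed.

Lemma product_part_sum : \big[Rplus/R0]_I product_part I = c * c.
Proof.
rewrite rsum_pair /product_part /= rsum2M -!big_distrr /= marg1_sum1 marg2_sum1; ring.
Qed.

Lemma gap_norm2_ge0 : 0 <= gap_norm2.
Proof. by apply: rsum_ge0 => I _; exact: Rle_0_sqr. Qed.

Lemma gap_norm2_le2 : gap_norm2 <= 2.
Proof.
have cc_le1 : c * c <= 1 by nra.
apply: Rle_trans (_ : \big[Rplus/R0]_I (joint_part I + product_part I) <= 2).
  apply: ler_rsum => I _; rewrite /gap.
  have := ler_rsum_term I joint_part_ge0; have := ler_rsum_term I product_part_ge0.
  rewrite joint_part_sum product_part_sum.
  by have := joint_part_ge0 I; have := product_part_ge0 I; nra.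
by rewrite big_split /= joint_part_sum product_part_sum; lra.
Qed.

Lemma bit_moment_neq (a i i' : 'I_k) : i != i' -> bit_moment c a i i' = 0.
Proof. exact: mean_centered_bitM. Qed.

Lemma bit_moment_sqr01 (a i : 'I_k) : 0 <= bit_moment c a i i <= 1.
Proof. exact: mean_centered_bit_sqr01. Qed.

Lemma joint_moment_diag01 : diag01 (joint_moment c p).
Proof.
split.
  move=> [i j] [i' j']; rewrite xpair_eqE negb_and => /orP [neq|neq];
  by rewrite /joint_moment /mean big1 // => x _ /=; rewrite (bit_moment_neq _ neq); ring.
move=> I; apply: mean_01 => // x.
by have := bit_moment_sqr01 x.1 I.1; have := bit_moment_sqr01 x.2 I.2; split; nra.
Qed.

Lemma product_moment_diag01 : diag01 (product_moment c p).
Proof.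
split.
  move=> [i j] [i' j']; rewrite xpair_eqE negb_and /product_moment /mean => /orP [neq|neq] /=.
    by rewrite [X in X * _]big1 ?Rmult_0_l // => x _; rewrite (bit_moment_neq _ neq); ring.
  by rewrite [X in _ * X]big1 ?Rmult_0_r // => x _; rewrite (bit_moment_neq _ neq); ring.
move=> I; rewrite /product_moment.
have := mean_01 p_ge0 p_sum1 (fun x => bit_moment_sqr01 x.1 I.1).
have := mean_01 p_ge0 p_sum1 (fun x => bit_moment_sqr01 x.2 I.2).
by move: (mean p _) (mean p _) => u v; split; nra.
Qed.

Lemma moment_sqr_sum :
  \big[Rplus/R0]_I \big[Rplus/R0]_J (moment I J * moment I J)
  <= 4 * (2 * INR #|pair_dom k| + 2).
Proof.
have cc_le1 : c * c <= 1 by nra.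
have jp2 : \big[Rplus/R0]_I (joint_part I * joint_part I) <= 1.
  by apply: rsum_sqr_le1 => [I|]; [exact: joint_part_ge0 | rewrite joint_part_sum].
have pp2 : \big[Rplus/R0]_I (product_part I * product_part I) <= 1.
  by apply: rsum_sqr_le1 => [I|]; [exact: product_part_ge0 | rewrite product_part_sum].
have jp2_ge0 := rsum_ge0 (P := xpredT) (fun I _ => Rle_0_sqr (joint_part I)).
have pp2_ge0 := rsum_ge0 (P := xpredT) (fun I _ => Rle_0_sqr (product_part I)).
rewrite /Rsqr in jp2_ge0 pp2_ge0.
have cross1 : \big[Rplus/R0]_I \big[Rplus/R0]_J
    ((joint_part I * product_part J) * (joint_part I * product_part J)) <= 1.
  rewrite (eq_bigr (fun I => \big[Rplus/R0]_J ((joint_part I * joint_part I)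
      * (product_part J * product_part J)))) => [|I _]; last by apply: eq_bigr => J _; ring.
  by rewrite rsum2M; nra.
have cross2 : \big[Rplus/R0]_I \big[Rplus/R0]_J
    ((joint_part J * product_part I) * (joint_part J * product_part I)) <= 1.
  rewrite (eq_bigr (fun I => \big[Rplus/R0]_J ((product_part I * product_part I)
      * (joint_part J * joint_part J)))) => [|I _]; last by apply: eq_bigr => J _; ring.
  by rewrite rsum2M; nra.
have jm := diag01_sqr_sum joint_moment_diag01.
have pm := diag01_sqr_sum product_moment_diag01.
apply: Rle_trans (_ : \big[Rplus/R0]_I \big[Rplus/R0]_J
   (4 * (joint_moment c p I J * joint_moment c p I J
         + (joint_part I * product_part J) * (joint_part I * product_part J)
         + (joint_part J * product_part I) * (joint_part J * product_part I)
         + product_moment c p I J * product_moment c p I J)) <= _).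
  apply: ler_rsum => I _; apply: ler_rsum => J _.
  by rewrite (block_moment_triple c p_sum1); apply: sqr_sum4_le.
by rewrite rsum2Z !rsum2D; lra.
Qed.

Lemma moment_quad :
  \big[Rplus/R0]_I \big[Rplus/R0]_J (gap I * gap J * moment I J) <= 3 * gap_norm2.
Proof.
set a := \big[Rplus/R0]_I (gap I * joint_part I).
set b := \big[Rplus/R0]_I (gap I * product_part I).
have ab : a - b = gap_norm2 by rewrite /a /b -rsumB; apply: eq_bigr => I _; rewrite /gap; ring.
have expand I J : gap I * gap J * moment I J =
    gap I * gap J * joint_moment c p I J
    + (-1) * ((gap I * joint_part I) * (gap J * product_part J))
    + (-1) * ((gap I * product_part I) * (gap J * joint_part J))
    + gap I * gap J * product_moment c p I J.
  by rewrite (block_moment_triple c p_sum1); ring.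
under eq_bigr => I _ do under eq_bigr => J _ do rewrite expand.
rewrite !rsum2D !rsum2Z !rsum2M -/a -/b.
have := diag01_quad gap joint_moment_diag01; have := diag01_quad gap product_moment_diag01.
have := gap_norm2_le2; have := gap_norm2_ge0; have := Rle_0_sqr (a + b).
rewrite /Rsqr -/gap_norm2 -ab; nra.
Qed.

End MomentBounds.

Definition threshold_test (X : Type) (S : X -> R) (tau : R) (z : X) : R :=
  if Rle_dec (S z) tau then 1 else 0.

Lemma threshold_test01 (X : Type) (S : X -> R) tau z : 0 <= threshold_test S tau z <= 1.
Proof. by rewrite /threshold_test; case: Rle_dec => /= *; lra. Qed.

Section Chebyshev.
Variables (X : finType) (w : X -> R).
Hypothesis w_ge0 : forall x, 0 <= w x.
Hypothesis w_sum1 : \big[Rplus/R0]_x w x = 1.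
Variable S : X -> R.

Lemma chebyshev_upper tau : 0 < tau ->
  (1 - mean w (threshold_test S tau)) * (tau * tau) <= mean w (fun z => S z * S z).
Proof.
move=> tau_gt0; rewrite -{1}(mean_const w_sum1 1) -meanB -meanMr.
apply: ler_mean => // z; rewrite /threshold_test; case: Rle_dec => /= [_|gt_tau].
  by rewrite Rminus_diag Rmult_0_l; exact: Rle_0_sqr.
by have := Rnot_le_lt _ _ gt_tau; nra.
Qed.

Lemma chebyshev_lower tau L : tau < L ->
  mean w (threshold_test S tau) * ((L - tau) * (L - tau)) <=
  mean w (fun z => S z * S z) - 2 * L * mean w S + L * L.
Proof.
move=> lt_tau; rewrite -(mean_const w_sum1 (L * L)) -meanZ -meanB -meanD -meanMr.
apply: ler_mean => // z; rewrite /threshold_test; case: Rle_dec => /= [le_tau|_].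
  by nra.
by have := Rle_0_sqr (S z - L); rewrite /Rsqr; lra.
Qed.

End Chebyshev.

Lemma card_pair_dom k : INR #|pair_dom k| = INR k * INR k.
Proof. by rewrite card_prod card_ord -multE mult_INR. Qed.

Section ProductDistributions.
Variables (k : nat) (p : pair_dom k -> R).
Hypothesis p_ge0 : forall x, 0 <= p x.
Hypothesis p_sum1 : \big[Rplus/R0]_x p x = 1.

Definition marg_product (x : pair_dom k) : R := marg1 p x.1 * marg2 p x.2.

Lemma marg_product_distr : is_distr marg_product /\ is_product marg_product.
Proof.
have m1 := marg1_sum1 p_sum1; have m2 := marg2_sum1 p_sum1.
split; last by exists (marg1 p), (marg2 p); do !split => //; [exact: marg1_ge0 | exact: marg2_ge0].
split; first by move=> x; apply: Rmult_le_pos; [exact: marg1_ge0 | exact: marg2_ge0].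
by rewrite /rsum rsum_pair /marg_product /= rsum2M m1 m2 Rmult_1_l.
Qed.

Lemma gap_norm2E c :
  gap_norm2 c p = c * c * (c * c) *
    \big[Rplus/R0]_x ((p x - marg_product x) * (p x - marg_product x)).
Proof.
rewrite /gap_norm2 big_distrr /=; apply: eq_bigr => -[a b] _.
by rewrite /gap /joint_part /product_part /marg_product /=; ring.
Qed.

Lemma is_product_marg : is_product p -> p =1 marg_product.
Proof.
move=> [q1 [q2 [[_ q1_sum1] [[_ q2_sum1] pE]]]] [a b].
have m1 : marg1 p a = q1 a.
  rewrite /marg1 (eq_bigr (fun b => q1 a * q2 b)) => [|b' _]; last by rewrite pE.
  by rewrite -big_distrr /= -/(rsum q2) q2_sum1 Rmult_1_r.
have m2 : marg2 p b = q2 b.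
  rewrite /marg2 (eq_bigr (fun a => q2 b * q1 a)) => [|a' _]; last by rewrite pE /= Rmult_comm.
  by rewrite -big_distrr /= -/(rsum q1) q1_sum1 Rmult_1_r.
by rewrite pE /marg_product /= m1 m2.
Qed.

Lemma gap_norm2_product c : is_product p -> gap_norm2 c p = 0.
Proof.
move=> /is_product_marg pE; rewrite gap_norm2E big1 ?Rmult_0_r // => x _.
by rewrite pE; ring.
Qed.

(* A TV distance above gamma from the product of the marginals gives an l1
   distance above 2 gamma, hence by Cauchy-Schwarz an l2 distance above
   2 gamma / k. *)
Lemma gap_norm2_far c gamma : 0 < c -> 0 < gamma -> far_from_product gamma p ->
  4 * (c * c * (c * c)) * (gamma * gamma) < gap_norm2 c p * (INR k * INR k).
Proof.
move=> c_gt0 gamma_gt0 far; have [q_distr q_prod] := marg_product_distr.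
have tv_far := far _ q_distr q_prod; rewrite /dTV /rsum in tv_far.
have CS := rsum_sqr_le (fun x => Rabs (p x - marg_product x)); rewrite card_pair_dom in CS.
rewrite [X in _ <= _ * X](eq_bigr (fun x => (p x - marg_product x) * (p x - marg_product x)))
  in CS; last first.
  by move=> x _; rewrite -Rabs_mult Rabs_right //; apply: Rle_ge; exact: Rle_0_sqr.
rewrite gap_norm2E; move: tv_far CS.
set l1 := \big[Rplus/R0]_x _; set l2 := \big[Rplus/R0]_x _ => l1_gt l1_sqr.
have c4_gt0 : 0 < c * c * (c * c) by apply: Rmult_lt_0_compat; nra.
have : 2 * gamma * (2 * gamma) < l1 * l1 by apply: Rmult_le_0_lt_compat; lra.
nra.
Qed.

End ProductDistributions.

Lemma null_case_arith (M K beta V : R) : 1 <= M -> 2 <= K -> 200 * K <= M * beta ->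
  V <= 4 * (2 * (K * K) + 2) -> M * M * V <= (M * M * beta / 2) * (M * M * beta / 2) / 3.
Proof.
move=> M_ge1 K_ge2 M_large V_le.
have -> : (M * M * beta / 2) * (M * M * beta / 2) / 3 = M * M * ((M * beta) * (M * beta) / 12).
  by field.
apply: Rmult_le_compat_l; first nra.
have : (200 * K) * (200 * K) <= (M * beta) * (M * beta) by apply: Rmult_le_compat; lra.
nra.
Qed.

Lemma gap_case_arith (M K beta g Q V : R) : 1 <= M -> 2 <= K -> 200 * K <= M * beta ->
  0 < beta -> beta <= g -> g <= 2 -> Q <= 3 * g -> V <= 4 * (2 * (K * K) + 2) ->
  let L := M * M * g in let tau := M * M * beta / 2 in
  M * M * ((M - 1) * (M - 1)) * (g * g) + 2 * (M * M) * (M - 1) * Q + M * M * V - L * L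
  <= (L - tau) * (L - tau) / 3.
Proof.
move=> M_ge1 K_ge2 M_large beta_gt0 le_g g_le2 Q_le V_le L tau.
have MM_gt0 : 0 < M * M by nra.
have Mg_large : 200 * K <= M * g by nra.
set X := M * g in Mg_large.
have far_tau : L * L / 4 <= (L - tau) * (L - tau).
  have : 0 <= tau <= L / 2 by rewrite /tau /L; split; nra.
  nra.
have drift : M * M * ((M - 1) * (M - 1)) * (g * g) <= L * L.
  have : (M - 1) * (M - 1) <= M * M by nra.
  have : 0 <= g * g by nra.
  by rewrite /L; nra.
have cross : 2 * (M * M) * (M - 1) * Q <= M * M * (6 * X).
  have : 0 <= 2 * (M * M) * (M - 1) by nra.
  by rewrite /X; nra.
have noise : M * M * V <= M * M * (4 * (2 * (K * K) + 2)) by apply: Rmult_le_compat_l; lra.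
have key : 6 * X + 4 * (2 * (K * K) + 2) <= X * X / 12.
  have : (200 * K) * (200 * K) <= X * X by apply: Rmult_le_compat; lra.
  nra.
have : M * M * (6 * X + 4 * (2 * (K * K) + 2)) <= M * M * (X * X / 12).
  by apply: Rmult_le_compat_l; lra.
have : L * L / 4 = M * M * (X * X) / 4 by rewrite /L /X; field.
lra.
Qed.

Section IndependenceTest.
Variables (k : nat) (c : R).
Hypothesis c_gt0 : 0 < c.
Hypothesis c_lt1 : c < 1.
Variable p : pair_dom k -> R.
Hypothesis p_ge0 : forall x, 0 <= p x.
Hypothesis p_sum1 : \big[Rplus/R0]_x p x = 1.
Variables (N m : nat).
Hypothesis six_m_le : (6 * m <= N.+1)%nat.
Variable beta : R.
Hypothesis beta_gt0 : 0 < beta.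
Hypothesis m_ge1 : 1 <= INR m.
Hypothesis m_large : 200 * INR k <= INR m * beta.
Hypothesis k_ge2 : 2 <= INR k.

Local Notation M := (INR m).
Local Notation E := (mean (prod_weight (fun _ : 'I_N.+1 => message_law c p))).
Local Notation S := (stat m (triple_stat c)).
Local Notation moment := (block_moment (message_law c p) (triple_stat c)).
Local Notation tau := (M * M * beta / 2).

Let c_ge0 : 0 <= c. Proof. lra. Qed.
Let law_ge0 : forall (_ : 'I_N.+1) z, 0 <= message_law c p z.
Proof. by move=> _ z; apply: message_law_ge0 => //; lra. Qed.
Let law_sum1 := message_law_sum1 c p_sum1.
Let weight_ge0 := prod_weight_ge0 law_ge0.
Let weight_sum1 := prod_weight_sum1 (fun _ : 'I_N.+1 => law_sum1).

Lemma mean_test_stat : E S = M * M * gap_norm2 c p.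
Proof.
rewrite (mean_stat law_sum1 six_m_le) /gap_norm2 big_distrr /=; apply: eq_bigr => I _.
by rewrite (block_mean_triple c p_sum1) /gap; ring.
Qed.

Lemma mean_test_stat_sqr :
  E (fun z => S z * S z) =
  M * M * ((M - 1) * (M - 1)) * (gap_norm2 c p * gap_norm2 c p)
  + 2 * (M * M) * (M - 1) *
      \big[Rplus/R0]_I \big[Rplus/R0]_J (gap c p I * gap c p J * moment I J)
  + M * M * \big[Rplus/R0]_I \big[Rplus/R0]_J (moment I J * moment I J).
Proof.
rewrite (mean_stat_sqr law_sum1 six_m_le) /gap_norm2 -rsum2M -!rsum2Z -!rsum2D.
apply: eq_bigr => I _; apply: eq_bigr => J _.
by rewrite /group_moment !(block_mean_triple c p_sum1) /gap; ring.
Qed.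

Lemma accept_null : gap_norm2 c p = 0 -> E (threshold_test S tau) >= 2 / 3.
Proof.
move=> g0; have tau_gt0 : 0 < tau by nra.
have cheb := chebyshev_upper weight_ge0 weight_sum1 S tau_gt0.
rewrite mean_test_stat_sqr g0 in cheb.
have Q_le0 := moment_quad c_ge0 c_lt1 p_ge0 p_sum1; rewrite g0 Rmult_0_r in Q_le0.
have V_le := moment_sqr_sum c_ge0 c_lt1 p_ge0 p_sum1; rewrite card_pair_dom in V_le.
have noise := null_case_arith m_ge1 k_ge2 m_large V_le.
have drift : 2 * (M * M) * (M - 1) * \big[Rplus/R0]_I \big[Rplus/R0]_J
    (gap c p I * gap c p J * moment I J) <= 0.
  have : 0 <= 2 * (M * M) * (M - 1) by nra.
  nra.
move: cheb; set P := mean _ _ => cheb.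
have : (1 - P) * (tau * tau) <= tau * tau / 3 by apply: Rle_trans (cheb) _; lra.
have : 0 < tau * tau by nra.
nra.
Qed.

Lemma reject_gap : beta <= gap_norm2 c p -> 1 - E (threshold_test S tau) >= 2 / 3.
Proof.
move=> le_gap; set L := M * M * gap_norm2 c p.
have tau_lt : tau < L by rewrite /L; nra.
have cheb := chebyshev_lower weight_ge0 weight_sum1 S tau_lt.
rewrite mean_test_stat_sqr mean_test_stat -/L in cheb.
have V_le := moment_sqr_sum c_ge0 c_lt1 p_ge0 p_sum1; rewrite card_pair_dom in V_le.
have := gap_case_arith m_ge1 k_ge2 m_large beta_gt0 le_gap
  (gap_norm2_le2 c_ge0 c_lt1 p_ge0 p_sum1) (moment_quad c_ge0 c_lt1 p_ge0 p_sum1) V_le.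
rewrite /= -/L => noise; move: cheb; set P := mean _ _ => cheb.
set Q := \big[Rplus/R0]_I _ in cheb noise; set V := \big[Rplus/R0]_I _ in cheb noise.
have : P * ((L - tau) * (L - tau)) <= (L - tau) * (L - tau) / 3.
  by apply: Rle_trans (cheb) _; lra.
have : 0 < (L - tau) * (L - tau) by nra.
nra.
Qed.

End IndependenceTest.

Lemma rr_ratio_le_exp eps : 0 < eps <= 1 -> rr_ratio (eps / 16) <= exp (eps / 4).
Proof.
move=> [eps_gt0 eps_le1]; apply: Rle_trans (exp_ineq1_le (eps / 4)).
rewrite /rr_ratio; apply: (Rmult_le_reg_r (1 - eps / 16)); first lra.
by rewrite /Rdiv Rmult_assoc Rinv_l; nra.
Qed.

Lemma channel_LDP_exp k eps : 0 < eps <= 1 -> is_LDP eps (@channel k (eps / 16)).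
Proof.
move=> eps01 z x x'; have [eps_gt0 eps_le1] := eps01.
apply: Rle_trans (channel_LDP _ _ x x' z) _; try lra.
apply: Rmult_le_compat_r; first by apply: channel_ge0; lra.
have r0 : 0 <= rr_ratio (eps / 16).
  by apply: Rmult_le_pos; [lra | apply: Rlt_le; apply: Rinv_0_lt_compat; lra].
have r_le := rr_ratio_le_exp eps01.
have -> : exp eps = exp (eps / 4) * exp (eps / 4) * (exp (eps / 4) * exp (eps / 4)).
  by rewrite -!exp_plus; congr exp; field.
by apply: Rmult_le_compat; try apply: Rmult_le_compat; nra.
Qed.

Lemma INR_lt_divn_succ d n : (0 < d)%nat -> INR n < INR d * (INR (n %/ d) + 1).
Proof.
move=> d_gt0; rewrite -S_INR -mult_INR; apply: lt_INR; apply/ltP.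
by rewrite multE mulnC; exact: ltn_ceil.
Qed.

Lemma sample_size_bound (K gamma eps : R) (n : nat) : 2 <= K -> 0 < gamma <= 1 -> 0 < eps <= 1 ->
  INR n >= 40000000 * K ^ 3 / (gamma ^ 2 * eps ^ 4) ->
  let M := INR (n %/ 6) in
  1 <= M /\
  200 * K <= M * (4 * (eps / 16 * (eps / 16) * (eps / 16 * (eps / 16))) * (gamma * gamma) / (K * K)).
Proof.
move=> K_ge2 [gamma_gt0 gamma_le1] [eps_gt0 eps_le1] n_large M.
have n_lt : INR n < 6 * (M + 1) by have := INR_lt_divn_succ n (isT : (0 < 6)%nat); rewrite /M /=; lra.
set g := gamma ^ 2 * eps ^ 4 in n_large.
have g_gt0 : 0 < g by apply: Rmult_lt_0_compat; apply: pow_lt.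
have g_le1 : g <= 1.
  rewrite /g -(Rmult_1_l 1); apply: Rmult_le_compat; try (apply: pow_le; lra).
    by rewrite -(pow1 2); apply: pow_incr; lra.
  by rewrite -(pow1 4); apply: pow_incr; lra.
have K3E : K ^ 3 = K * K * K by ring.
have K3 : 8 <= K ^ 3 by rewrite K3E; nra.
have ng : 40000000 * K ^ 3 <= INR n * g.
  apply: (Rmult_le_reg_r (/ g)); first exact: Rinv_0_lt_compat.
  by rewrite (Rmult_assoc (INR n)) Rinv_r; lra.
have Mg : 3276800 * K ^ 3 <= M * g by nra.
split; first nra.
have -> : M * (4 * (eps / 16 * (eps / 16) * (eps / 16 * (eps / 16))) * (gamma * gamma) / (K * K))
    = (M * g) / (16384 * (K * K)) by rewrite /g; field; lra.
apply: (Rmult_le_reg_r (16384 * (K * K))); first nra.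
have -> : M * g / (16384 * (K * K)) * (16384 * (K * K)) = M * g by field; nra.
by rewrite K3E in Mg; nra.
Qed.

Lemma prob_indepE (X Z : finType) (n : nat) (p : X -> R) (W : X -> Z -> R)
    (A : {ffun 'I_n -> Z} -> R) :
  prob_indep p W A = mean (prod_weight (fun _ : 'I_n => fun z => mean p (W^~ z))) A.
Proof. by []. Qed.

Theorem theorem6p1 :
  exists C : R, C > 0 /\
  forall (k : nat) (gamma eps : R) (n : nat),
    (2 <= k)%nat ->
    0 < gamma <= 1 ->
    0 < eps <= 1 ->
    INR n >= C * INR k ^ 3 / (gamma ^ 2 * eps ^ 4) ->
    exists (Z : finType) (W : pair_dom k -> Z -> R) (A : {ffun 'I_n -> Z} -> R),
      is_channel W /\ is_LDP eps W /\ (forall z, 0 <= A z <= 1) /\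
      forall p : pair_dom k -> R, is_distr p ->
        (is_product p -> prob_indep p W A >= 2 / 3) /\
        (far_from_product gamma p -> 1 - prob_indep p W A >= 2 / 3).
Proof.
exists 40000000; split; first lra.
move=> k gamma eps n k_ge2 gamma01 eps01 n_large.
have K_ge2 : 2 <= INR k by apply: (le_INR 2 k); apply/leP.
have [] := sample_size_bound K_ge2 gamma01 eps01 n_large.
case: n {n_large} => [|N] m_ge1 m_large; first by move: m_ge1 => /=; lra.
set c := eps / 16 in m_large; set m := (N.+1 %/ 6)%nat in m_ge1 m_large.
set beta := _ / (INR k * INR k) in m_large.
have [c_gt0 c_lt1] : 0 < c < 1 by rewrite /c; lra.
have beta_gt0 : 0 < beta.
  by apply: Rdiv_lt_0_compat; [do !apply: Rmult_lt_0_compat | nra]; lra.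
have six_m : (6 * m <= N.+1)%nat by rewrite mulnC leq_divM.
exists (message k), (channel c), (threshold_test (stat m (triple_stat c)) (INR m * INR m * beta / 2)).
split; first by split=> [x z|x]; [apply: channel_ge0; lra | exact: channel_sum1].
split; first exact: channel_LDP_exp.
split=> [z|p [p_ge0 p_sum1]]; first exact: threshold_test01.
rewrite prob_indepE; split=> [/(gap_norm2_product c) | far].
  exact: (accept_null c_gt0 c_lt1 p_ge0 p_sum1 six_m beta_gt0 m_ge1 m_large K_ge2).
apply: (reject_gap c_gt0 c_lt1 p_ge0 p_sum1 six_m beta_gt0 m_ge1 m_large K_ge2).
have gap_far := gap_norm2_far p_ge0 p_sum1 c_gt0 (proj1 gamma01) far.
apply: Rlt_le; apply: (Rmult_lt_reg_r (INR k * INR k)); first nra.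
by rewrite /beta /Rdiv Rmult_assoc Rinv_l ?Rmult_1_r //; nra.
Qed.
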